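(* Let $\alpha,\beta\in C^\infty(\mathbb R)$ and consider $u_t=K:=uu_x+\hbar^2\alpha(u)u_x^3$. Then the formal series $$Q_\beta=\sum_{n=0}^\infty\hbar^{2n}\frac{\alpha(u)^n\beta^{(n)}(u)}{n!}u_x^{2n+1}$$ is a formal symmetry: $K'[Q_\beta]-Q_\beta'[K]=0$ order by order in $\hbar$. Its coefficients $\beta_n$ (with $Q_\beta=\sum\hbar^{2n}\beta_nu_x^{2n+1}$, $\beta_0=\beta$) are the unique solution of $n\beta_n=(1-n)\alpha'\beta_{n-1}+\alpha\beta_{n-1}'$, $n\ge1$, and $Q_\beta$ is the unique formal symmetry $\sum_{n\ge0}\hbar^{2n}Q_{2n+1}$, $Q_{2n+1}\in\mathcal D_{2n+1}$, with $Q_1=\beta(u)u_x$.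
   Context: $u_k=\partial_x^ku$; $\mathcal D=C^\infty(\mathbb R)[u_1,u_2,\dots]$ (coefficients smooth in $u$), graded by $\deg u_k=k$; $\mathcal D_k$ is the span of degree-$k$ monomials. Total derivative $D=\sum_{r\ge0}u_{r+1}\partial/\partial u_r$ ($u_0=u$); Fréchet derivative $P'[V]=\sum_{r\ge0}\frac{\partial P}{\partial u_r}D^rV$, extended coefficientwise to formal series in the formal parameter $\hbar$. A formal symmetry of $u_t=K$ is a formal series $Q$ with $K'[Q]-Q'[K]=0$. $\beta^{(n)}$ is the $n$-th derivative of $\beta$. *)

From Stdlib Require Import Reals List Arith.
From Coquelicot Require Import Coquelicot.
Import ListNotations.
Open Scope R_scope.

Definition smooth (f : R -> R) : Prop :=
  forall (n : nat) (x : R), ex_derive (Derive_n f n) x.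

(* A jet: j r is the value of u_r (u_0 = u). *)
Definition jet := nat -> R.

(* A term  c(u) * u_1^(e_0) * u_2^(e_1) * ... * u_m^(e_(m-1)). *)
Record term := mkTerm { tc : R -> R ; te : list nat }.

Definition dpoly := list term.

Fixpoint mono_eval (e : list nat) (j : jet) (k : nat) : R :=
  match e with
  | nil => 1
  | a :: e' => (j k) ^ a * mono_eval e' j (S k)
  end.

Definition term_eval (t : term) (j : jet) : R := tc t (j O) * mono_eval (te t) j 1.

Definition dp_eval (P : dpoly) (j : jet) : R :=
  fold_right (fun t acc => term_eval t j + acc) 0 P.

(* Equality of elements of D (the evaluation map is injective on D). *)
Definition dp_eq (P Q : dpoly) : Prop := forall j : jet, dp_eval P j = dp_eval Q j.

Fixpoint mono_deg (e : list nat) (k : nat) : nat :=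
  match e with
  | nil => O
  | a :: e' => (k * a + mono_deg e' (S k))%nat
  end.

Definition dp_smooth (P : dpoly) : Prop := List.Forall (fun t => smooth (tc t)) P.
Definition dp_homog (k : nat) (P : dpoly) : Prop := List.Forall (fun t => mono_deg (te t) 1 = k) P.

Definition dp_opp (P : dpoly) : dpoly := map (fun t => mkTerm (fun x => - tc t x) (te t)) P.
Definition dp_add (P Q : dpoly) : dpoly := P ++ Q.
Definition dp_sub (P Q : dpoly) : dpoly := dp_add P (dp_opp Q).

Fixpoint ladd (a b : list nat) : list nat :=
  match a, b with
  | nil, _ => b
  | _, nil => a
  | x :: a', y :: b' => (x + y)%nat :: ladd a' b'
  end.

Definition tmul (t s : term) : term :=
  mkTerm (fun x => tc t x * tc s x) (ladd (te t) (te s)).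

Definition dp_mul (P Q : dpoly) : dpoly := flat_map (fun t => map (tmul t) Q) P.

Definition dp_var (m : nat) : dpoly :=
  match m with
  | O => [mkTerm (fun x => x) nil]
  | S k => [mkTerm (fun _ => 1) (repeat O k ++ [1%nat])]
  end.

Fixpoint ldec (r : nat) (e : list nat) : list nat :=
  match e, r with
  | nil, _ => nil
  | a :: e', O => Nat.pred a :: e'
  | a :: e', S r' => a :: ldec r' e'
  end.

Definition dpartial (r : nat) (P : dpoly) : dpoly :=
  match r with
  | O => map (fun t => mkTerm (Derive (tc t)) (te t)) P
  | S r' => map (fun t => mkTerm (fun x => INR (nth r' (te t) O) * tc t x) (ldec r' (te t))) P
  end.

Definition nvars (P : dpoly) : nat := fold_right (fun t n => Nat.max (length (te t)) n) O P.

Definition totD (P : dpoly) : dpoly :=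
  concat (map (fun r => dp_mul (dp_var (S r)) (dpartial r P)) (seq O (S (nvars P)))).

Definition totDn (n : nat) (P : dpoly) : dpoly := Nat.iter n totD P.

Definition frechet (P V : dpoly) : dpoly :=
  concat (map (fun r => dp_mul (dpartial r P) (totDn r V)) (seq O (S (nvars P)))).

(* S k is the coefficient of hbar^k. *)
Definition series := nat -> dpoly.

Definition sfrechet (P V : series) (k : nat) : dpoly :=
  concat (map (fun i => frechet (P i) (V (k - i)%nat)) (seq O (S k))).

Definition formal_symmetry (K Q : series) : Prop :=
  forall k : nat, dp_eq (dp_sub (sfrechet K Q k) (sfrechet Q K k)) nil.

Definition Kser (alpha : R -> R) : series :=
  fun k => match k with
           | O => [mkTerm (fun x => x) [1%nat]]
           | 2%nat => [mkTerm alpha [3%nat]]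
           | _ => nil
           end.

Definition beta_n (alpha beta : R -> R) (n : nat) : R -> R :=
  fun x => (alpha x) ^ n * Derive_n beta n x / INR (fact n).

(* Q_beta = sum_n hbar^(2n) beta_n(u) u_x^(2n+1) *)
Definition Qbeta (alpha beta : R -> R) : series :=
  fun k => if Nat.even k then [mkTerm (beta_n alpha beta (Nat.div2 k)) [S k]] else nil.

Definition beta_rec (alpha : R -> R) (b : nat -> R -> R) : Prop :=
  forall (n : nat) (x : R), (1 <= n)%nat ->
    INR n * b n x
    = (1 - INR n) * Derive alpha x * b (Nat.pred n) x + alpha x * Derive (b (Nat.pred n)) x.

(** Split [K = K_0 + h^2 K_2] with [K_0 = u u_1] and [K_2 = alpha(u) u_1^3], and let
    [L V = K_0'[V] - V'[K_0]].  Since [K] has no odd powers of [h], the coefficient of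
    [h^(2n+2)] in [K'[Q] - Q'[K]] is [L Q_(2n+3) + K_2'[Q_(2n+1)] - Q_(2n+1)'[K_2]].  For
    [Q_(2n+1) = beta_n(u) u_1^(2n+1)] this is [-2] times the residual of the recursion for
    [beta_(n+1)] times [u_1^(2n+4)], hence zero.

    Uniqueness reduces to the injectivity of [L] on [D_d], [d >= 2].  Scale [u_2, u_3, ...] by
    [mu].  If [V] has lowest degree [s] in [u_2, u_3, ...], the lowest power of [mu] in [L V] is
    [mu^s], with coefficient [u_1 (1 - d - s)] times that part of [V], by Euler's identity for the
    weight.  As polynomials are only accessed through their values at jets, "comparing
    coefficients" is done by continuity, once in [mu] and once in [u_1]. *)

From Stdlib Require Import Reals List Arith Lia Lra FunctionalExtensionality.
From Coquelicot Require Import Coquelicot.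
Import ListNotations.
Open Scope R_scope.

Fixpoint sum_upto (n : nat) (f : nat -> R) : R :=
  match n with
  | O => 0
  | S n' => f O + sum_upto n' (fun i => f (S i))
  end.

Lemma sum_upto_ext n f g :
  (forall i, (i < n)%nat -> f i = g i) -> sum_upto n f = sum_upto n g.
Proof.
  revert f g; induction n as [|n IH]; intros f g H; simpl; auto.
  rewrite (H 0%nat) by lia. f_equal. apply IH. intros i Hi; apply H; lia.
Qed.

Lemma sum_upto_S n f : sum_upto (S n) f = sum_upto n f + f n.
Proof.
  revert f; induction n as [|n IH]; intros f; [simpl; ring|].
  change (f O + sum_upto (S n) (fun i => f (S i)) = f O + sum_upto n (fun i => f (S i)) + f (S n)).
  rewrite IH. ring.
Qed.

Lemma sum_upto_plus n f g :
  sum_upto n (fun i => f i + g i) = sum_upto n f + sum_upto n g.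
Proof. revert f g; induction n as [|n IH]; intros f g; simpl; [ring|rewrite IH; ring]. Qed.

Lemma sum_upto_minus n f g :
  sum_upto n (fun i => f i - g i) = sum_upto n f - sum_upto n g.
Proof. revert f g; induction n as [|n IH]; intros f g; simpl; [ring|rewrite IH; ring]. Qed.

Lemma sum_upto_scal n c f : sum_upto n (fun i => c * f i) = c * sum_upto n f.
Proof. revert f; induction n as [|n IH]; intros f; simpl; [ring|rewrite IH; ring]. Qed.

Lemma sum_upto_zero n f : (forall i, (i < n)%nat -> f i = 0) -> sum_upto n f = 0.
Proof.
  intros H. rewrite (sum_upto_ext n f (fun _ => 0 * 0)) by (intros i Hi; rewrite H; auto; ring).
  rewrite sum_upto_scal. ring.
Qed.

Lemma sum_upto_pad n m f :
  (n <= m)%nat -> (forall i, (n <= i < m)%nat -> f i = 0) -> sum_upto m f = sum_upto n f.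
Proof.
  intros Hnm H. induction m as [|m IH].
  - replace n with 0%nat by lia. reflexivity.
  - destruct (Nat.eq_dec n (S m)) as [->|Hne]; [reflexivity|].
    rewrite sum_upto_S, IH, H by (try lia; intros; apply H; lia). ring.
Qed.

Lemma sum_upto_delta n p f :
  (p < n)%nat -> sum_upto n (fun i => if Nat.eqb p i then f i else 0) = f p.
Proof.
  revert p f; induction n as [|n IH]; intros p f Hp; [lia|simpl].
  destruct p as [|p]; simpl.
  - rewrite sum_upto_zero; [ring|reflexivity].
  - rewrite (IH p (fun i => f (S i))) by lia. ring.
Qed.

Lemma dp_eval_cons t P j : dp_eval (t :: P) j = term_eval t j + dp_eval P j.
Proof. reflexivity. Qed.

Lemma dp_eval_app P Q j : dp_eval (P ++ Q) j = dp_eval P j + dp_eval Q j.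
Proof. induction P as [|t P IH]; simpl; [ring|rewrite IH; ring]. Qed.

Lemma dp_eval_concat_map_seq (g : nat -> dpoly) k n j :
  dp_eval (concat (map g (seq k n))) j = sum_upto n (fun i => dp_eval (g (k + i)%nat) j).
Proof.
  revert k; induction n as [|n IH]; intros k; simpl; [reflexivity|].
  rewrite dp_eval_app, IH, Nat.add_0_r. f_equal.
  apply sum_upto_ext. intros i _. now replace (k + S i)%nat with (S k + i)%nat by lia.
Qed.

Lemma mono_eval_ladd a b j k : mono_eval (ladd a b) j k = mono_eval a j k * mono_eval b j k.
Proof.
  revert b k; induction a as [|x a IH]; intros [|y b] k; simpl; try ring.
  rewrite IH, pow_add. ring.
Qed.

Lemma dp_eval_mul P Q j : dp_eval (dp_mul P Q) j = dp_eval P j * dp_eval Q j.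
Proof.
  assert (Hmap : forall t, dp_eval (map (tmul t) Q) j = term_eval t j * dp_eval Q j).
  { intros t. induction Q as [|s Q IH]; simpl; [ring|].
    rewrite IH. unfold term_eval, tmul; simpl. rewrite mono_eval_ladd. ring. }
  unfold dp_mul. induction P as [|t P IH]; simpl; [ring|].
  rewrite dp_eval_app, Hmap, IH. ring.
Qed.

Lemma dp_eval_opp P j : dp_eval (dp_opp P) j = - dp_eval P j.
Proof. induction P as [|t P IH]; simpl; [ring|rewrite IH; unfold term_eval; simpl; ring]. Qed.

Lemma dp_eval_sub P Q j : dp_eval (dp_sub P Q) j = dp_eval P j - dp_eval Q j.
Proof. unfold dp_sub, dp_add. rewrite dp_eval_app, dp_eval_opp. ring. Qed.

Lemma dp_eval_var r j : dp_eval (dp_var (S r)) j = j (S r).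
Proof.
  assert (Hmono : forall k, mono_eval (repeat 0%nat r ++ [1%nat]) j k = j (k + r)%nat).
  { induction r as [|r IH]; intros k; simpl.
    - rewrite Nat.add_0_r. ring.
    - rewrite IH. replace (k + S r)%nat with (S k + r)%nat by lia. ring. }
  simpl. unfold term_eval; simpl. rewrite Hmono. simpl. ring.
Qed.

Lemma nvars_app A B : nvars (A ++ B) = Nat.max (nvars A) (nvars B).
Proof. induction A as [|t A IH]; simpl; [reflexivity|rewrite IH; lia]. Qed.

Lemma nvars_sub A B : nvars (dp_sub A B) = Nat.max (nvars A) (nvars B).
Proof.
  unfold dp_sub, dp_add. rewrite nvars_app. f_equal.
  induction B as [|t B IH]; simpl; [reflexivity|now rewrite IH].
Qed.

Lemma nvars_In P t : In t P -> (length (te t) <= nvars P)%nat.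
Proof.
  induction P as [|s P IH]; simpl; intros H; [contradiction|].
  destruct H as [->|H]; [lia|specialize (IH H); lia].
Qed.

Definition lsum {A : Type} (L : list A) (f : A -> R) : R :=
  fold_right (fun x acc => f x + acc) 0 L.

Lemma lsum_cons {A : Type} x (L : list A) f : lsum (x :: L) f = f x + lsum L f.
Proof. reflexivity. Qed.

Lemma lsum_app {A : Type} (L L' : list A) f : lsum (L ++ L') f = lsum L f + lsum L' f.
Proof. induction L as [|x L IH]; simpl; [ring|rewrite IH; ring]. Qed.

Lemma lsum_map {A B : Type} (h : A -> B) (L : list A) f :
  lsum (map h L) f = lsum L (fun x => f (h x)).
Proof. induction L as [|x L IH]; simpl; [reflexivity|now rewrite IH]. Qed.

Lemma lsum_ext {A : Type} (L : list A) f g :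
  (forall x, In x L -> f x = g x) -> lsum L f = lsum L g.
Proof.
  induction L as [|x L IH]; intros H; simpl; [reflexivity|].
  rewrite H by now left. rewrite IH; auto. intros y Hy; apply H; now right.
Qed.

Lemma lsum_plus {A : Type} (L : list A) f g :
  lsum L (fun x => f x + g x) = lsum L f + lsum L g.
Proof. induction L as [|x L IH]; simpl; [ring|rewrite IH; ring]. Qed.

Lemma lsum_scal {A : Type} (L : list A) c f : lsum L (fun x => c * f x) = c * lsum L f.
Proof. induction L as [|x L IH]; simpl; [ring|rewrite IH; ring]. Qed.

Lemma lsum_filter {A : Type} (L : list A) (p : A -> bool) f :
  lsum (filter p L) f = lsum L (fun x => if p x then f x else 0).
Proof. induction L as [|x L IH]; simpl; [reflexivity|destruct (p x); simpl; rewrite IH; ring]. Qed.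

(* Value at [j] of [dt/du_(r+1)], the contribution of [t] to [dpartial (S r)]. *)
Definition dterm (r : nat) (t : term) (j : jet) : R :=
  INR (nth r (te t) 0%nat) * tc t (j 0%nat) * mono_eval (ldec r (te t)) j 1.

Lemma dp_eval_dpartial_S r P j : dp_eval (dpartial (S r) P) j = lsum P (fun t => dterm r t j).
Proof.
  unfold dp_eval, lsum, dpartial. induction P as [|t P IH]; simpl; [reflexivity|].
  rewrite IH. unfold term_eval, dterm; simpl. ring.
Qed.

Lemma dpartial_S_beyond r P j : (nvars P <= r)%nat -> dp_eval (dpartial (S r) P) j = 0.
Proof.
  rewrite dp_eval_dpartial_S. induction P as [|t P IH]; simpl; intros H; [reflexivity|].
  rewrite IH by lia. unfold dterm. rewrite nth_overflow by lia. simpl. ring.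
Qed.

Lemma dp_eval_totD V j :
  dp_eval (totD V) j = sum_upto (S (nvars V)) (fun r => dp_eval (dpartial r V) j * j (S r)).
Proof.
  unfold totD. rewrite dp_eval_concat_map_seq. apply sum_upto_ext. intros r _.
  simpl (0 + r)%nat. rewrite dp_eval_mul, dp_eval_var. ring.
Qed.

Lemma dp_eval_frechet P V j :
  dp_eval (frechet P V) j
  = sum_upto (S (nvars P)) (fun r => dp_eval (dpartial r P) j * dp_eval (totDn r V) j).
Proof.
  unfold frechet. rewrite dp_eval_concat_map_seq. apply sum_upto_ext. intros r _.
  simpl (0 + r)%nat. now rewrite dp_eval_mul.
Qed.

Definition jet_set (j : jet) (i : nat) (y : R) : jet :=
  fun k => if Nat.eqb k i then y else j k.

Lemma jet_set_id j i : jet_set j i (j i) = j.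
Proof.
  apply functional_extensionality; intros k. unfold jet_set.
  destruct (Nat.eqb_spec k i); congruence.
Qed.

Lemma mono_eval_jet_set_lt e j i y k :
  (i < k)%nat -> mono_eval e (jet_set j i y) k = mono_eval e j k.
Proof.
  revert k; induction e as [|a e IH]; intros k H; simpl; [reflexivity|].
  rewrite IH by lia. unfold jet_set. destruct (Nat.eqb_spec k i); [lia|reflexivity].
Qed.

Lemma mono_eval_is_derive e j k r :
  is_derive (fun y => mono_eval e (jet_set j (k + r) y) k) (j (k + r)%nat)
            (INR (nth r e 0%nat) * mono_eval (ldec r e) j k).
Proof.
  revert k r; induction e as [|a e IH]; intros k [|r].
  - replace (INR _ * _) with 0 by (simpl; ring). exact (is_derive_const 1 _).
  - replace (INR _ * _) with 0 by (simpl; ring). exact (is_derive_const 1 _).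
  - rewrite Nat.add_0_r.
    apply (is_derive_ext (fun y => mono_eval e j (S k) * y ^ a)).
    { intros y. simpl. rewrite mono_eval_jet_set_lt by lia.
      unfold jet_set. rewrite Nat.eqb_refl. ring. }
    replace (INR _ * _) with (mono_eval e j (S k) * (INR a * 1 * j k ^ Nat.pred a))
      by (simpl; ring).
    exact (is_derive_scal _ _ _ _ (is_derive_pow _ a _ _ (is_derive_id _))).
  - replace (k + S r)%nat with (S k + r)%nat by lia.
    apply (is_derive_ext (fun y => j k ^ a * mono_eval e (jet_set j (S k + r) y) (S k))).
    { intros y. cbn [mono_eval]. do 2 f_equal. unfold jet_set.
      now replace (k =? S k + r)%nat with false by (symmetry; apply Nat.eqb_neq; lia). }
    replace (INR _ * _) with (j k ^ a * (INR (nth r e 0%nat) * mono_eval (ldec r e) j (S k)))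
      by (simpl; ring).
    apply is_derive_scal, IH.
Qed.

Definition coef_diff (P : dpoly) : Prop := List.Forall (fun t => forall x, ex_derive (tc t) x) P.

Lemma dp_eval_is_derive P j r :
  (r = 0%nat -> coef_diff P) ->
  is_derive (fun y => dp_eval P (jet_set j r y)) (j r) (dp_eval (dpartial r P) j).
Proof.
  intros Hd. induction P as [|t P IH]; [destruct r; exact (is_derive_const 0 _)|].
  assert (IH' : is_derive (fun y => dp_eval P (jet_set j r y)) (j r) (dp_eval (dpartial r P) j)).
  { apply IH. intros Hr. specialize (Hd Hr). now inversion Hd. }
  destruct r as [|r].
  - assert (Ht : forall x, ex_derive (tc t) x) by (specialize (Hd eq_refl); now inversion Hd).
    assert (Hterm : is_derive (fun y => mono_eval (te t) j 1 * tc t y) (j 0%nat)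
                      (mono_eval (te t) j 1 * Derive (tc t) (j 0%nat)))
      by exact (is_derive_scal _ _ _ _ (Derive_correct _ _ (Ht _))).
    apply (is_derive_ext (fun y => mono_eval (te t) j 1 * tc t y + dp_eval P (jet_set j 0 y))).
    { intros y. rewrite dp_eval_cons. unfold term_eval. rewrite mono_eval_jet_set_lt by lia.
      change (jet_set j 0 y 0%nat) with y. apply Rplus_eq_compat_r, Rmult_comm. }
    replace (dp_eval _ j)
      with (mono_eval (te t) j 1 * Derive (tc t) (j 0%nat) + dp_eval (dpartial 0 P) j)
      by (cbn [dpartial map]; rewrite dp_eval_cons; unfold term_eval; cbn [tc te]; ring).
    exact (is_derive_plus _ _ _ _ _ Hterm IH').
  - assert (Hterm := is_derive_scal _ _ (tc t (j 0%nat)) _ (mono_eval_is_derive (te t) j 1 r)).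
    replace (dp_eval _ j)
      with (tc t (j 0%nat) * (INR (nth r (te t) 0%nat) * mono_eval (ldec r (te t)) j 1)
                                + dp_eval (dpartial (S r) P) j)
      by (cbn [dpartial map]; rewrite dp_eval_cons; unfold term_eval; cbn [tc te]; ring).
    exact (is_derive_plus _ _ _ _ _ Hterm IH').
Qed.

(* Representation-independent counterpart of [dpartial]. *)
Definition pdiff (r : nat) (F : jet -> R) (j : jet) : R :=
  Derive (fun y => F (jet_set j r y)) (j r).

Lemma pdiff_ext r F G j : (forall j', F j' = G j') -> pdiff r F j = pdiff r G j.
Proof. intros H. unfold pdiff. apply Derive_ext. intros; apply H. Qed.

Lemma dp_eval_dpartial P j r :
  (r = 0%nat -> coef_diff P) -> dp_eval (dpartial r P) j = pdiff r (dp_eval P) j.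
Proof. intros Hd. symmetry. apply is_derive_unique, dp_eval_is_derive, Hd. Qed.

Lemma sum_dpartial_pdiff (P : dpoly) (c : nat -> R) j N :
  coef_diff P -> (nvars P <= N)%nat ->
  sum_upto (S (nvars P)) (fun r => dp_eval (dpartial r P) j * c r)
  = sum_upto (S N) (fun r => pdiff r (dp_eval P) j * c r).
Proof.
  intros Hd HN. rewrite <- (sum_upto_pad (S (nvars P)) (S N)) by
    (lia || (intros [|r] Hr; [lia|rewrite dpartial_S_beyond by lia; ring])).
  apply sum_upto_ext. intros r _. rewrite dp_eval_dpartial by auto. reflexivity.
Qed.

Lemma totD_dp_eq V V' : coef_diff V -> coef_diff V' -> dp_eq V V' -> dp_eq (totD V) (totD V').
Proof.
  intros H H' E j. rewrite !dp_eval_totD.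
  rewrite (sum_dpartial_pdiff V _ j (Nat.max (nvars V) (nvars V'))),
          (sum_dpartial_pdiff V' _ j (Nat.max (nvars V) (nvars V'))) by (auto; lia).
  apply sum_upto_ext. intros r _. now rewrite (pdiff_ext r _ _ j E).
Qed.

Lemma frechet_dp_eq_l P P' V :
  coef_diff P -> coef_diff P' -> dp_eq P P' -> dp_eq (frechet P V) (frechet P' V).
Proof.
  intros H H' E j. rewrite !dp_eval_frechet.
  rewrite (sum_dpartial_pdiff P _ j (Nat.max (nvars P) (nvars P'))),
          (sum_dpartial_pdiff P' _ j (Nat.max (nvars P) (nvars P'))) by (auto; lia).
  apply sum_upto_ext. intros r _. now rewrite (pdiff_ext r _ _ j E).
Qed.

Lemma frechet_dp_eq_r P V V' :
  (nvars P <= 1)%nat -> coef_diff V -> coef_diff V' -> dp_eq V V' ->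
  dp_eq (frechet P V) (frechet P V').
Proof.
  intros HP H H' E j. rewrite !dp_eval_frechet. apply sum_upto_ext. intros [|[|r]] Hr.
  - simpl. now rewrite E.
  - simpl. now rewrite (totD_dp_eq V V' H H' E j).
  - lia.
Qed.

(** * The operator [V |-> K_0'[V] - V'[K_0]] *)

Lemma smooth_scal a f : smooth f -> smooth (fun x => a * f x).
Proof.
  intros Hf n x.
  apply (ex_derive_ext (fun y => a * Derive_n f n y)).
  { intros y. symmetry. apply Derive_n_scal_l. }
  apply ex_derive_scal, Hf.
Qed.

Lemma smooth_Derive f : smooth f -> smooth (Derive f).
Proof.
  intros Hf n x.
  apply (ex_derive_ext (Derive_n f (n + 1))).
  { intros y. symmetry. apply (Derive_n_comp f n 1). }
  apply Hf.
Qed.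

Lemma Derive_n_id_SS n x : Derive_n (fun y => y) (S (S n)) x = 0.
Proof.
  replace (S (S n)) with (S n + 1)%nat by lia.
  rewrite <- (Derive_n_comp _ (S n) 1), (Derive_n_ext _ (fun _ => 1)); [apply Derive_n_const|].
  intros y. change (Derive (fun z => z) y = 1). apply Derive_id.
Qed.

Lemma smooth_id : smooth (fun x => x).
Proof.
  intros [|[|n]] x.
  - change (ex_derive (fun y => y) x). apply ex_derive_id.
  - apply (ex_derive_ext (fun _ => 1)); [|apply ex_derive_const].
    intros y. change (1 = Derive (fun z => z) y). symmetry. apply Derive_id.
  - apply (ex_derive_ext (fun _ => 0)); [|apply ex_derive_const].
    intros y. symmetry. apply Derive_n_id_SS.
Qed.

Lemma dp_smooth_coef_diff P : dp_smooth P -> coef_diff P.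
Proof. apply Forall_impl. intros t H x. exact (H 0%nat x). Qed.

Lemma dp_smooth_dpartial r P : dp_smooth P -> dp_smooth (dpartial r P).
Proof.
  intros H. destruct r; apply Forall_map; revert H; apply Forall_impl; intros t Ht.
  - exact (smooth_Derive _ Ht).
  - exact (smooth_scal _ _ Ht).
Qed.

Lemma dp_smooth_totD V : dp_smooth V -> dp_smooth (totD V).
Proof.
  intros H. unfold totD. induction (seq 0 (S (nvars V))) as [|r l IH]; [constructor|].
  apply Forall_app. split; [|exact IH].
  cbn [map concat dp_mul flat_map dp_var]. rewrite app_nil_r. apply Forall_map.
  generalize (dp_smooth_dpartial r V H). apply Forall_impl. intros t Ht.
  exact (smooth_scal 1 (tc t) Ht).
Qed.

(* [leibniz r f = sum_(p = 0)^r C(r, p) f p (r + 1 - p)]: the Leibniz expansion of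
   [D^r (u_0 u_1)] with each product [u_p u_q] replaced by [f p q]. *)
Fixpoint leibniz (r : nat) (f : nat -> nat -> R) : R :=
  match r with
  | O => f O 1%nat
  | S r' => leibniz r' (fun p q => f (S p) q + f p (S q))
  end.

Lemma leibniz_ext r f g :
  (forall p q, (p + q = S r)%nat -> f p q = g p q) -> leibniz r f = leibniz r g.
Proof.
  revert f g; induction r as [|r IH]; intros f g H; simpl; [apply H; lia|].
  apply IH; intros p q Hpq. rewrite (H (S p) q), (H p (S q)) by lia. reflexivity.
Qed.

Lemma leibniz_plus r f g : leibniz r (fun p q => f p q + g p q) = leibniz r f + leibniz r g.
Proof.
  revert f g; induction r as [|r IH]; intros f g; simpl; [reflexivity|].
  rewrite <- IH. apply leibniz_ext; intros; ring.
Qed.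

Lemma leibniz_scal r c f : leibniz r (fun p q => c * f p q) = c * leibniz r f.
Proof.
  revert f; induction r as [|r IH]; intros f; simpl; [reflexivity|].
  rewrite <- IH. apply leibniz_ext; intros; ring.
Qed.

Lemma leibniz_sum_upto r n h :
  leibniz r (fun p q => sum_upto n (fun i => h i p q)) = sum_upto n (fun i => leibniz r (h i)).
Proof.
  revert h; induction n as [|n IH]; intros h; simpl.
  - rewrite (leibniz_ext r _ (fun _ _ => 0 * 0)) by (intros; ring). rewrite leibniz_scal. ring.
  - now rewrite leibniz_plus, IH.
Qed.

Lemma leibniz_is_derive r (f : nat -> nat -> R -> R) (df : nat -> nat -> R) x :
  (forall p q, is_derive (f p q) x (df p q)) ->
  is_derive (fun y => leibniz r (fun p q => f p q y)) x (leibniz r df).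
Proof.
  revert f df; induction r as [|r IH]; intros f df H; [apply H|].
  apply (IH (fun p q y => f (S p) q y + f p (S q) y)). intros p q.
  exact (is_derive_plus _ _ _ _ _ (H (S p) q) (H p (S q))).
Qed.

Lemma leibniz_p0 r g : leibniz r (fun p q => if Nat.eqb p 0 then g q else 0) = g (S r).
Proof.
  revert g; induction r as [|r IH]; intros g; simpl; [reflexivity|].
  rewrite <- (IH (fun q => g (S q))). apply leibniz_ext; intros [|p] q _; simpl; ring.
Qed.

Lemma leibniz_p1 r g : leibniz r (fun p q => if Nat.eqb p 1 then g q else 0) = INR r * g r.
Proof.
  revert g; induction r as [|r IH]; intros g; [simpl; ring|].
  rewrite S_INR. simpl. rewrite leibniz_plus, leibniz_p0, IH. ring.
Qed.

Lemma leibniz_q0 r g : leibniz r (fun p q => if Nat.eqb q 0 then g p else 0) = 0.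
Proof.
  revert g; induction r as [|r IH]; intros g; simpl; [reflexivity|].
  etransitivity; [|apply (IH (fun p => g (S p)))].
  apply leibniz_ext; intros p [|q] _; simpl; ring.
Qed.

Lemma leibniz_q1 r g : leibniz r (fun p q => if Nat.eqb q 1 then g p else 0) = g r.
Proof.
  revert g; induction r as [|r IH]; intros g; simpl; [reflexivity|].
  rewrite leibniz_plus, leibniz_q0, IH. ring.
Qed.

Definition uux : dpoly := [mkTerm (fun x => x) [1%nat]].

Definition Duux (r : nat) (j : jet) : R := leibniz r (fun p q => j p * j q).

Lemma dp_smooth_totDn_uux r : dp_smooth (totDn r uux).
Proof.
  induction r as [|r IH].
  - repeat constructor. apply smooth_id.
  - now apply dp_smooth_totD.
Qed.

Lemma pdiff_Duux r i j :
  pdiff i (Duux r) j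
  = leibniz r (fun p q =>
      (if Nat.eqb p i then 1 else 0) * j q + j p * (if Nat.eqb q i then 1 else 0)).
Proof.
  assert (Hcoord : forall p,
            is_derive (fun y => jet_set j i y p) (j i) (if Nat.eqb p i then 1 else 0)).
  { intros p. unfold jet_set.
    destruct (Nat.eqb p i); [exact (is_derive_id _)|exact (is_derive_const _ _)]. }
  apply is_derive_unique.
  apply (leibniz_is_derive r (fun p q y => jet_set j i y p * jet_set j i y q)). intros p q.
  assert (H := is_derive_mult _ _ _ _ _ (Hcoord p) (Hcoord q) Rmult_comm).
  cbv beta in H. rewrite jet_set_id in H. exact H.
Qed.

Lemma dp_eval_totDn_uux r j : dp_eval (totDn r uux) j = Duux r j.
Proof.
  revert j; induction r as [|r IH]; intros j; [unfold Duux; simpl; unfold term_eval; simpl; ring|].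
  set (N := Nat.max (nvars (totDn r uux)) (S r)).
  change (totDn (S r) uux) with (totD (totDn r uux)).
  rewrite dp_eval_totD, (sum_dpartial_pdiff _ _ j N)
    by (apply dp_smooth_coef_diff, dp_smooth_totDn_uux || unfold N; lia).
  rewrite (sum_upto_ext _ _ (fun i => leibniz r (fun p q =>
             (if Nat.eqb p i then j (S i) * j q else 0)
             + (if Nat.eqb q i then j p * j (S i) else 0)))).
  2: { intros i _. rewrite (pdiff_ext i _ (Duux r)) by auto.
       rewrite pdiff_Duux, Rmult_comm, <- leibniz_scal. apply leibniz_ext. intros p q _.
       destruct (Nat.eqb p i), (Nat.eqb q i); ring. }
  rewrite <- leibniz_sum_upto. unfold Duux. cbn [leibniz]. apply leibniz_ext. intros p q Hpq.
  rewrite sum_upto_plus, !sum_upto_delta by (unfold N; lia). reflexivity.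
Qed.

(* Value at [j] of [D^r (u u_1) - u u_(r+1)]; for [r >= 1] it no longer involves [u]. *)
Definition Duux_tail (r : nat) (j : jet) : R := Duux r j - j 0%nat * j (S r).

(* Value at [j] of [K_0'[V] - V'[K_0]] for [K_0 = u u_1], provided [V] only involves
   [u_0, ..., u_N]; the terms containing [dV/du] cancel. *)
Definition comm_uux (N : nat) (V : dpoly) (j : jet) : R :=
  j 1%nat * dp_eval V j - sum_upto N (fun r => dp_eval (dpartial (S r) V) j * Duux_tail (S r) j).

Lemma frechet_uux_comm V j :
  dp_eval (frechet uux V) j - dp_eval (frechet V uux) j = comm_uux (nvars V) V j.
Proof.
  rewrite !dp_eval_frechet. unfold comm_uux. change (nvars uux) with 1%nat.
  rewrite (sum_upto_ext (S (nvars V)) _ (fun r => dp_eval (dpartial r V) j * Duux r j))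
    by (intros; now rewrite dp_eval_totDn_uux).
  cbn [sum_upto]. change (totDn 0 V) with V. change (totDn 1 V) with (totD V).
  rewrite dp_eval_totD. cbn [sum_upto].
  assert (Hu : dp_eval (dpartial 0 uux) j = j 1%nat).
  { simpl. unfold term_eval; simpl. rewrite Derive_id. ring. }
  assert (Hux : dp_eval (dpartial 1 uux) j = j 0%nat) by (simpl; unfold term_eval; simpl; ring).
  rewrite Hu, Hux.
  rewrite (sum_upto_ext _ (fun r => dp_eval (dpartial (S r) V) j * Duux_tail (S r) j)
             (fun r => dp_eval (dpartial (S r) V) j * Duux (S r) j
                       - j 0%nat * (dp_eval (dpartial (S r) V) j * j (S (S r)))))
    by (intros; unfold Duux_tail; ring).
  rewrite sum_upto_minus, sum_upto_scal. unfold Duux; simpl. ring.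
Qed.

Lemma comm_uux_pad N V j : (nvars V <= N)%nat -> comm_uux N V j = comm_uux (nvars V) V j.
Proof.
  intros H. unfold comm_uux. f_equal. apply sum_upto_pad; [lia|].
  intros i Hi. rewrite dpartial_S_beyond by lia. ring.
Qed.

Lemma comm_uux_lsum N P j : comm_uux N P j = lsum P (fun t => comm_uux N [t] j).
Proof.
  unfold comm_uux. induction P as [|t P IH].
  - rewrite sum_upto_zero; [simpl; ring|intros; simpl; ring].
  - rewrite lsum_cons, <- IH, !dp_eval_cons.
    rewrite (sum_upto_ext N _ (fun r => dp_eval (dpartial (S r) [t]) j * Duux_tail (S r) j
                                      + dp_eval (dpartial (S r) P) j * Duux_tail (S r) j)).
    + rewrite sum_upto_plus. simpl. ring.
    + intros r _. rewrite !dp_eval_dpartial_S. simpl. ring.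
Qed.

Lemma comm_uux_sub N A B j : comm_uux N (dp_sub A B) j = comm_uux N A j - comm_uux N B j.
Proof.
  rewrite !comm_uux_lsum. unfold dp_sub, dp_add, dp_opp. rewrite lsum_app, lsum_map.
  rewrite (lsum_ext B _ (fun t => -1 * comm_uux N [t] j)), lsum_scal; [ring|].
  intros t _. unfold comm_uux.
  rewrite (sum_upto_ext N _ (fun r => -1 * (dp_eval (dpartial (S r) [t]) j * Duux_tail (S r) j)))
    by (intros; rewrite !dp_eval_dpartial_S; unfold dterm; simpl; ring).
  rewrite sum_upto_scal. simpl. unfold term_eval. simpl. ring.
Qed.

(** * Scaling the higher derivatives *)

(* Total degree in [u_2, u_3, ...] of the monomial with exponents [e], listed from [u_1] on. *)
Definition higher_deg (e : list nat) : nat :=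
  match e with
  | [] => 0%nat
  | _ :: e' => list_sum e'
  end.

Definition scale_higher (mu : R) (j : jet) : jet :=
  fun k => if Nat.ltb k 2 then j k else mu * j k.

Lemma mono_eval_scale_higher e mu j k :
  (2 <= k)%nat -> mono_eval e (scale_higher mu j) k = mu ^ list_sum e * mono_eval e j k.
Proof.
  revert k; induction e as [|a e IH]; intros k Hk; simpl; [ring|].
  rewrite IH by lia. unfold scale_higher. destruct (Nat.ltb_spec k 2); [lia|].
  rewrite pow_add, Rpow_mult_distr. ring.
Qed.

Lemma mono_eval_1_scale_higher e mu j :
  mono_eval e (scale_higher mu j) 1 = mu ^ higher_deg e * mono_eval e j 1.
Proof.
  destruct e as [|a e]; simpl; [ring|].
  rewrite mono_eval_scale_higher by lia. unfold scale_higher at 1. simpl. ring.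
Qed.

Lemma term_eval_scale_higher t mu j :
  term_eval t (scale_higher mu j) = mu ^ higher_deg (te t) * term_eval t j.
Proof.
  unfold term_eval. rewrite mono_eval_1_scale_higher. unfold scale_higher at 1. simpl. ring.
Qed.

Lemma dterm_0_scale_higher t mu j :
  dterm 0 t (scale_higher mu j) = mu ^ higher_deg (te t) * dterm 0 t j.
Proof.
  unfold dterm. rewrite mono_eval_1_scale_higher. unfold scale_higher at 1. simpl.
  destruct (te t); simpl; ring.
Qed.

(* Differentiating in [u_(r+2)] lowers the higher degree by one, if the result is nonzero. *)
Lemma dterm_S_scale_higher r t mu j :
  mu * dterm (S r) t (scale_higher mu j) = mu ^ higher_deg (te t) * dterm (S r) t j.
Proof.
  unfold dterm. destruct (te t) as [|a e]; [simpl; ring|].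
  destruct (Nat.eq_dec (nth r e 0%nat) 0) as [E|E]; simpl; rewrite ?E; [simpl; ring|].
  rewrite !mono_eval_scale_higher by lia. unfold scale_higher at 1 2. simpl.
  assert (Hsum : S (list_sum (ldec r e)) = list_sum e).
  { clear -E. revert r E; induction e as [|b e IH]; intros [|r] E; simpl in *; try lia.
    specialize (IH r E). lia. }
  rewrite <- Hsum. simpl. ring.
Qed.

Lemma jet_mul_dterm r t j : j (S r) * dterm r t j = INR (nth r (te t) 0%nat) * term_eval t j.
Proof.
  assert (Hmono : forall e k r, j (k + r)%nat * (INR (nth r e 0%nat) * mono_eval (ldec r e) j k)
                                = INR (nth r e 0%nat) * mono_eval e j k).
  { clear. induction e as [|a e IH]; intros k [|r]; simpl; try ring.
    - rewrite Nat.add_0_r. destruct a; simpl; ring.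
    - replace (k + S r)%nat with (S k + r)%nat by lia.
      transitivity
        (j k ^ a * (j (S k + r)%nat * (INR (nth r e 0%nat) * mono_eval (ldec r e) j (S k))));
        [ring|rewrite IH; ring]. }
  unfold dterm, term_eval.
  transitivity (tc t (j 0%nat)
                * (j (1 + r)%nat * (INR (nth r (te t) 0%nat) * mono_eval (ldec r (te t)) j 1)));
    [simpl; ring|rewrite Hmono; ring].
Qed.

Lemma sum_upto_weighted_exponents e k N :
  (length e <= N)%nat ->
  sum_upto N (fun i => INR (k + i) * INR (nth i e 0%nat)) = INR (mono_deg e k).
Proof.
  revert k N; induction e as [|a e IH]; intros k N H.
  - apply sum_upto_zero. intros [|i] _; simpl; ring.
  - destruct N as [|N]; [simpl in H; lia|]. cbn [sum_upto mono_deg nth].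
    rewrite (sum_upto_ext _ _ (fun i => INR (S k + i) * INR (nth i e 0%nat)))
      by (intros i _; now rewrite <- plus_n_Sm).
    rewrite IH by (simpl in H; lia). rewrite Nat.add_0_r, plus_INR, mult_INR. ring.
Qed.

Lemma sum_upto_exponents e N :
  (length e <= N)%nat -> sum_upto N (fun i => INR (nth i e 0%nat)) = INR (list_sum e).
Proof.
  revert N; induction e as [|a e IH]; intros N H.
  - apply sum_upto_zero. intros [|i] _; simpl; ring.
  - destruct N as [|N]; [simpl in H; lia|]. cbn [sum_upto nth].
    change (list_sum (a :: e)) with (a + list_sum e)%nat.
    rewrite IH by (simpl in H; lia). rewrite plus_INR. ring.
Qed.

Lemma sum_upto_higher_exponents e N :
  (length e <= S N)%nat -> sum_upto N (fun i => INR (nth (S i) e 0%nat)) = INR (higher_deg e).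
Proof.
  destruct e as [|a e]; intros H.
  - apply sum_upto_zero. intros; simpl; ring.
  - apply sum_upto_exponents. simpl in H. lia.
Qed.

Definition Duux_higher (r : nat) (j : jet) : R :=
  leibniz r (fun p q => if andb (Nat.leb 2 p) (Nat.leb 2 q) then j p * j q else 0).

Lemma Duux_tail_scale_higher r mu j :
  Duux_tail r (scale_higher mu j)
  = INR r * (j 1%nat * scale_higher mu j r) + (if Nat.leb 2 r then mu * j r * j 1%nat else 0)
    + mu ^ 2 * Duux_higher r j.
Proof.
  unfold Duux_tail, Duux.
  rewrite (leibniz_ext r _ (fun p q =>
      (if Nat.eqb p 0 then scale_higher mu j 0%nat * scale_higher mu j q else 0)
    + (if Nat.eqb p 1 then j 1%nat * scale_higher mu j q else 0)
    + (if Nat.eqb q 1 then (if Nat.leb 2 p then mu * j p * j 1%nat else 0) else 0)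
    + mu ^ 2 * (if andb (Nat.leb 2 p) (Nat.leb 2 q) then j p * j q else 0)
    + (if Nat.eqb q 0 then (if Nat.leb 2 p then scale_higher mu j p * j 0%nat else 0) else 0)))
    by (intros [|[|p]] [|[|q]] _; unfold scale_higher; simpl; ring).
  rewrite !leibniz_plus, leibniz_scal, leibniz_p0, leibniz_p1, leibniz_q0.
  rewrite (leibniz_q1 r (fun p => if Nat.leb 2 p then mu * j p * j 1%nat else 0)).
  unfold Duux_higher. generalize (if Nat.leb 2 r then mu * j r * j 1%nat else 0). intros. ring.
Qed.

Lemma Duux_tail_1_scale_higher mu j :
  Duux_tail 1 (scale_higher mu j) = j 1%nat * j 1%nat + mu ^ 2 * Duux_higher 1 j.
Proof. rewrite Duux_tail_scale_higher. unfold scale_higher. simpl. ring. Qed.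

Lemma Duux_tail_ge2_scale_higher r mu j :
  (2 <= r)%nat ->
  Duux_tail r (scale_higher mu j) = mu * ((INR r + 1) * j 1%nat * j r + mu * Duux_higher r j).
Proof.
  intros H. rewrite Duux_tail_scale_higher. unfold scale_higher at 1.
  destruct (Nat.ltb_spec r 2), (Nat.leb_spec 2 r); try lia. ring.
Qed.

Lemma comm_uux_term_scale_higher t d N j :
  (length (te t) <= S N)%nat -> mono_deg (te t) 1 = d ->
  exists b c, forall mu,
    comm_uux (S N) [t] (scale_higher mu j)
    = mu ^ higher_deg (te t)
      * (j 1%nat * (1 - INR d - INR (higher_deg (te t))) * term_eval t j + mu * b + mu ^ 2 * c).
Proof.
  intros Hlen Hd. set (g := higher_deg (te t)). set (T := term_eval t j).
  set (n := fun i => INR (nth i (te t) 0%nat)).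
  exists (- sum_upto N (fun i => dterm (S i) t j * Duux_higher (S (S i)) j)),
         (- dterm 0 t j * Duux_higher 1 j).
  intros mu. unfold comm_uux. cbn [sum_upto].
  rewrite !dp_eval_dpartial_S, dp_eval_cons. cbn [lsum fold_right dp_eval].
  assert (Hhigher : sum_upto N (fun i => dp_eval (dpartial (S (S i)) [t]) (scale_higher mu j)
                                         * Duux_tail (S (S i)) (scale_higher mu j))
                    = mu ^ g * (j 1%nat * T * sum_upto N (fun i => (INR (S (S i)) + 1) * n (S i))
                                + mu * sum_upto N (fun i =>
                                         dterm (S i) t j * Duux_higher (S (S i)) j))).
  { rewrite <- !sum_upto_scal, <- sum_upto_plus, <- sum_upto_scal. apply sum_upto_ext. intros i _.
    rewrite dp_eval_dpartial_S. cbn [lsum fold_right].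
    rewrite Duux_tail_ge2_scale_higher by lia.
    transitivity ((mu * dterm (S i) t (scale_higher mu j))
                  * ((INR (S (S i)) + 1) * j 1%nat * j (S (S i)) + mu * Duux_higher (S (S i)) j));
      [ring|].
    rewrite dterm_S_scale_higher.
    transitivity (mu ^ g * ((INR (S (S i)) + 1) * j 1%nat * (j (S (S i)) * dterm (S i) t j)
                            + mu * (dterm (S i) t j * Duux_higher (S (S i)) j))); [unfold g; ring|].
    rewrite jet_mul_dterm. unfold n, T. ring. }
  rewrite Hhigher, term_eval_scale_higher, dterm_0_scale_higher, Duux_tail_1_scale_higher.
  assert (Hweight : n 0%nat + sum_upto N (fun i => INR (S (S i)) * n (S i)) = INR d).
  { rewrite <- Hd, <- (sum_upto_weighted_exponents (te t) 1 (S N)) by exact Hlen.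
    cbn [sum_upto]. unfold n. simpl. ring. }
  assert (Hhdeg : sum_upto N (fun i => n (S i)) = INR g)
    by (apply sum_upto_higher_exponents; exact Hlen).
  assert (Hu1 : j 1%nat * dterm 0 t j = n 0%nat * T) by apply (jet_mul_dterm 0).
  rewrite (sum_upto_ext _ _ (fun i => INR (S (S i)) * n (S i) + n (S i))) by (intros; ring).
  rewrite sum_upto_plus, Hhdeg.
  replace (sum_upto N (fun i => INR (S (S i)) * n (S i))) with (INR d - n 0%nat) by lra.
  fold g. fold T. change (scale_higher mu j 1%nat) with (j 1%nat).
  transitivity (mu ^ g * (j 1%nat * T - j 1%nat * (j 1%nat * dterm 0 t j)
                 - j 1%nat * T * (INR d - n 0%nat + INR g)
                 + mu * - sum_upto N (fun i => dterm (S i) t j * Duux_higher (S (S i)) j)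
                 + mu ^ 2 * (- dterm 0 t j * Duux_higher 1 j))); [ring|].
  rewrite Hu1. ring.
Qed.

(** * Injectivity on homogeneous differential polynomials *)

Lemma continuity_pt_zero_off (f : R -> R) x0 :
  continuity_pt f x0 -> (forall y, y <> x0 -> f y = 0) -> f x0 = 0.
Proof.
  intros Hc H. destruct (Req_dec (f x0) 0) as [|Hne]; [assumption|exfalso].
  destruct (Hc (Rabs (f x0)) (Rabs_pos_lt _ Hne)) as [delta [Hdelta Hx]].
  assert (Hnear : Rabs (0 - f x0) < Rabs (f x0)).
  { rewrite <- (H (x0 + delta / 2)) by lra. apply Hx. split; [split; [constructor|lra]|].
    simpl. unfold R_dist. replace (x0 + delta / 2 - x0) with (delta / 2) by ring.
    rewrite Rabs_right; lra. }
  rewrite Rminus_0_l, Rabs_Ropp in Hnear. lra.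
Qed.

Lemma ex_derive_continuity_pt (f : R -> R) x : ex_derive f x -> continuity_pt f x.
Proof. intros H. apply continuity_pt_filterlim. exact (ex_derive_continuous f x H). Qed.

(* Divide by [mu ^ s] and let [mu -> 0]. *)
Lemma lowest_order_cancels {A : Type} (L : list A) (g : A -> nat) (a : A -> R) (h : A -> R -> R) s :
  (forall x, In x L -> (s <= g x)%nat) ->
  (forall x, In x L -> exists b c, forall mu, h x mu = mu ^ g x * (a x + mu * b + mu ^ 2 * c)) ->
  (forall mu, lsum L (fun x => h x mu) = 0) ->
  lsum L (fun x => if Nat.eqb (g x) s then a x else 0) = 0.
Proof.
  intros Hg Hh Hsum.
  assert (Hfactor : exists F : R -> R, (forall mu, ex_derive F mu)
            /\ F 0 = lsum L (fun x => if Nat.eqb (g x) s then a x else 0)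
            /\ forall mu, lsum L (fun x => h x mu) = mu ^ s * F mu).
  { clear Hsum. induction L as [|x L IH].
    - exists (fun _ => 0). repeat split; [intros; apply ex_derive_const|intros; simpl; ring].
    - destruct IH as [F [HF [HF0 HFmu]]];
        [intros; apply Hg; now right|intros; apply Hh; now right|].
      destruct (Hh x (or_introl eq_refl)) as [b [c Hbc]].
      assert (Hsx := Hg x (or_introl eq_refl)).
      exists (fun mu => mu ^ (g x - s) * (a x + mu * b + mu ^ 2 * c) + F mu). repeat split.
      + intros mu. auto_derive. apply HF.
      + rewrite lsum_cons, <- HF0. destruct (Nat.eqb_spec (g x) s) as [->|Hne].
        * rewrite Nat.sub_diag. simpl. ring.
        * rewrite pow_i by lia. ring.
      + intros mu. rewrite lsum_cons, HFmu, Hbc.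
        replace (g x) with (s + (g x - s))%nat at 1 by lia. rewrite pow_add. ring. }
  destruct Hfactor as [F [HF [HF0 HFmu]]]. rewrite <- HF0.
  apply continuity_pt_zero_off; [apply ex_derive_continuity_pt, HF|].
  intros mu Hmu. specialize (HFmu mu). rewrite Hsum in HFmu.
  destruct (Rmult_integral _ _ (eq_sym HFmu)) as [H|H]; [|exact H].
  exfalso. exact (pow_nonzero mu s Hmu H).
Qed.

Definition part_below (s : nat) (P : dpoly) : dpoly :=
  filter (fun t => Nat.ltb (higher_deg (te t)) s) P.

Definition part_at (s : nat) (P : dpoly) : dpoly :=
  filter (fun t => Nat.eqb (higher_deg (te t)) s) P.

Lemma dp_eval_lsum P j : dp_eval P j = lsum P (fun t => term_eval t j).
Proof. reflexivity. Qed.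

Lemma dp_eval_part_below_S s P j :
  dp_eval (part_below (S s) P) j = dp_eval (part_below s P) j + dp_eval (part_at s P) j.
Proof.
  unfold part_below, part_at. rewrite !dp_eval_lsum, !lsum_filter, <- lsum_plus.
  apply lsum_ext. intros t _.
  destruct (Nat.ltb_spec (higher_deg (te t)) (S s)), (Nat.ltb_spec (higher_deg (te t)) s),
           (Nat.eqb_spec (higher_deg (te t)) s); (ring || lia).
Qed.

Lemma comm_uux_of_vanishing N P j : (forall j', dp_eval P j' = 0) -> comm_uux N P j = 0.
Proof.
  intros H. unfold comm_uux. rewrite H, sum_upto_zero; [ring|]. intros r _.
  rewrite dp_eval_dpartial by discriminate. unfold pdiff.
  rewrite (Derive_ext _ (fun _ => 0)) by (intros; apply H). rewrite Derive_const. ring.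
Qed.

Lemma list_sum_le_mono_deg e k : (1 <= k)%nat -> (list_sum e <= mono_deg e k)%nat.
Proof.
  revert k; induction e as [|a e IH]; intros k Hk; simpl; [lia|].
  specialize (IH (S k) ltac:(lia)). nia.
Qed.

Lemma higher_deg_le_mono_deg e : (higher_deg e <= mono_deg e 1)%nat.
Proof. destruct e as [|a e]; simpl; [lia|]. pose proof (list_sum_le_mono_deg e 2). lia. Qed.

Lemma comm_uux_part_at_vanishes P d N s :
  (2 <= d)%nat -> (nvars P <= S N)%nat -> dp_homog d P ->
  (forall j, comm_uux (S N) P j = 0) -> (forall j, dp_eval (part_below s P) j = 0) ->
  forall j, dp_eval (part_at s P) j = 0.
Proof.
  intros Hd HN Hhom Hcomm Hbelow.
  set (gt := fun t : term => negb (Nat.ltb (higher_deg (te t)) s)).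
  assert (Hlead : forall j, j 1%nat * (1 - INR d - INR s) * dp_eval (part_at s P) j = 0).
  { intros j.
    assert (Hrest : forall mu,
              lsum (filter gt P) (fun t => comm_uux (S N) [t] (scale_higher mu j)) = 0).
    { intros mu. rewrite <- (Hcomm (scale_higher mu j)), comm_uux_lsum.
      rewrite <- (Rplus_0_l (lsum (filter gt P) _)).
      rewrite <- (comm_uux_of_vanishing (S N) _ (scale_higher mu j) Hbelow), comm_uux_lsum.
      unfold part_below. rewrite !lsum_filter, <- lsum_plus. apply lsum_ext. intros t _.
      unfold gt. destruct (Nat.ltb (higher_deg (te t)) s); simpl; ring. }
    assert (Hge : forall t, In t (filter gt P) -> (s <= higher_deg (te t))%nat).
    { intros t Ht. apply filter_In in Ht. destruct Ht as [_ Ht]. unfold gt in Ht.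
      apply Bool.negb_true_iff, Nat.ltb_ge in Ht. exact Ht. }
    assert (Hexpand : forall t, In t (filter gt P) -> exists b c, forall mu,
              comm_uux (S N) [t] (scale_higher mu j)
              = mu ^ higher_deg (te t)
                * (j 1%nat * (1 - INR d - INR (higher_deg (te t))) * term_eval t j
                   + mu * b + mu ^ 2 * c)).
    { intros t Ht. apply filter_In in Ht. destruct Ht as [Ht _].
      apply comm_uux_term_scale_higher.
      + pose proof (nvars_In P t Ht). lia.
      + exact (proj1 (Forall_forall _ _) Hhom t Ht). }
    rewrite <- (lowest_order_cancels _ _ _ _ s Hge Hexpand Hrest).
    unfold part_at, gt. rewrite dp_eval_lsum, !lsum_filter, <- lsum_scal.
    apply lsum_ext. intros t _.
    destruct (Nat.ltb_spec (higher_deg (te t)) s), (Nat.eqb_spec (higher_deg (te t)) s);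
      simpl; try lia; subst; ring. }
  assert (Hcoef : 1 - INR d - INR s <> 0).
  { assert (INR 2 <= INR d) by (apply le_INR; exact Hd). pose proof (pos_INR s). simpl in *. lra. }
  intros j. rewrite <- (jet_set_id j 1).
  assert (Hoff : forall y, y <> 0 -> dp_eval (part_at s P) (jet_set j 1 y) = 0).
  { intros y Hy. specialize (Hlead (jet_set j 1 y)). unfold jet_set at 1 in Hlead. simpl in Hlead.
    destruct (Rmult_integral _ _ Hlead) as [H|H]; [|exact H].
    destruct (Rmult_integral _ _ H); contradiction. }
  destruct (Req_dec (j 1%nat) 0) as [Hj|Hj]; [|now apply Hoff].
  rewrite Hj. apply (continuity_pt_zero_off (fun y => dp_eval (part_at s P) (jet_set j 1 y)));
    [|exact Hoff].
  apply ex_derive_continuity_pt. rewrite <- Hj.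
  eexists. apply dp_eval_is_derive. discriminate.
Qed.

Lemma comm_uux_homog_injective P d N :
  (2 <= d)%nat -> (nvars P <= N)%nat -> dp_homog d P ->
  (forall j, comm_uux N P j = 0) -> forall j, dp_eval P j = 0.
Proof.
  intros Hd HN Hhom Hcomm.
  assert (HcommS : forall j, comm_uux (S N) P j = 0).
  { intros j. rewrite comm_uux_pad, <- (comm_uux_pad N) by lia. apply Hcomm. }
  assert (Hbelow : forall s j, dp_eval (part_below s P) j = 0).
  { induction s as [|s IH]; intros j.
    - unfold part_below. rewrite dp_eval_lsum, lsum_filter.
      rewrite (lsum_ext _ _ (fun _ => 0 * 0)) by (intros t _; simpl; ring).
      rewrite lsum_scal. ring.
    - rewrite dp_eval_part_below_S, IH, Rplus_0_l.
      exact (comm_uux_part_at_vanishes P d N s Hd ltac:(lia) Hhom HcommS IH j). }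
  intros j. rewrite <- (Hbelow (S d) j). unfold part_below.
  rewrite forallb_filter_id; [reflexivity|].
  apply forallb_forall. intros t Ht. apply Nat.ltb_lt.
  rewrite <- (proj1 (Forall_forall _ _) Hhom t Ht). pose proof (higher_deg_le_mono_deg (te t)). lia.
Qed.

(** * The coefficients [beta_n] *)

Lemma beta_n_0 alpha beta x : beta_n alpha beta 0 x = beta x.
Proof. unfold beta_n. simpl. field. Qed.

Lemma beta_n_is_derive alpha beta n x :
  smooth alpha -> smooth beta ->
  is_derive (beta_n alpha beta n) x
    ((INR n * Derive alpha x * alpha x ^ Nat.pred n * Derive_n beta n x
      + alpha x ^ n * Derive_n beta (S n) x) / INR (fact n)).
Proof.
  intros Ha Hb.
  assert (H := is_derive_scal _ _ (/ INR (fact n)) _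
                 (is_derive_mult _ _ _ _ _
                    (is_derive_pow alpha n x _ (Derive_correct alpha x (Ha 0%nat x)))
                    (Derive_correct (Derive_n beta n) x (Hb n x)) Rmult_comm)).
  apply (is_derive_ext _ _ _ _ (fun y => Rmult_comm _ _)) in H.
  change (Derive (Derive_n beta n) x) with (Derive_n beta (S n) x) in H.
  unfold beta_n, Rdiv. cbv beta in H.
  match goal with |- is_derive _ _ ?v => replace v with
    (/ INR (fact n) * (INR n * Derive alpha x * alpha x ^ Nat.pred n * Derive_n beta n x
                        + alpha x ^ n * Derive_n beta (S n) x)) by ring end.
  exact H.
Qed.

Lemma beta_n_ex_derive alpha beta n x :
  smooth alpha -> smooth beta -> ex_derive (beta_n alpha beta n) x.
Proof. intros Ha Hb. eexists. now apply beta_n_is_derive. Qed.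

Lemma beta_n_rec alpha beta : smooth alpha -> smooth beta -> beta_rec alpha (beta_n alpha beta).
Proof.
  intros Ha Hb [|n] x Hn; [lia|]. simpl Nat.pred.
  rewrite (is_derive_unique _ _ _ (beta_n_is_derive alpha beta n x Ha Hb)).
  unfold beta_n. rewrite fact_simpl, mult_INR, S_INR.
  assert (Hf : INR (fact n) <> 0) by apply INR_fact_neq_0.
  assert (HS : INR n + 1 <> 0) by (rewrite <- S_INR; apply not_0_INR; lia).
  assert (Hpow : INR n * alpha x ^ Nat.pred n * alpha x = INR n * alpha x ^ n)
    by (destruct n; simpl; ring).
  simpl (alpha x ^ S n). field_simplify_eq; [|auto..].
  rewrite <- Hpow. change (Derive_n beta (S n) x) with (Derive (Derive_n beta n) x). ring.
Qed.

Lemma beta_rec_unique alpha beta b :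
  smooth alpha -> smooth beta -> (forall x, b O x = beta x) -> beta_rec alpha b ->
  forall n x, b n x = beta_n alpha beta n x.
Proof.
  intros Ha Hb Hb0 Hrec n. induction n as [|n IH]; intros x.
  - now rewrite Hb0, beta_n_0.
  - apply (Rmult_eq_reg_l (INR (S n))); [|apply not_0_INR; lia].
    rewrite (Hrec (S n) x), (beta_n_rec alpha beta Ha Hb (S n) x) by lia. simpl Nat.pred.
    rewrite IH, (Derive_ext (b n) (beta_n alpha beta n)) by auto. reflexivity.
Qed.

(** * The symmetry condition order by order *)

Definition alpha_ux3 (alpha : R -> R) : dpoly := [mkTerm alpha [3%nat]].

Definition comm_ux3 (alpha : R -> R) (V : dpoly) (j : jet) : R :=
  dp_eval (frechet (alpha_ux3 alpha) V) j - dp_eval (frechet V (alpha_ux3 alpha)) j.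

Lemma Kser_other alpha k : k <> 0%nat -> k <> 2%nat -> Kser alpha k = [].
Proof. intros H0 H2. destruct k as [|[|[|k]]]; (lia || reflexivity). Qed.

Lemma dp_eval_frechet_nil P j : dp_eval (frechet P []) j = 0.
Proof.
  assert (Hnil : forall r, totDn r [] = [])
    by (induction r as [|r IH]; [|simpl; rewrite IH]; reflexivity).
  rewrite dp_eval_frechet. apply sum_upto_zero. intros r _. rewrite Hnil. simpl. ring.
Qed.

Definition Kser_defect (alpha : R -> R) (V : series) (k : nat) (j : jet) : R :=
  dp_eval (dp_sub (sfrechet (Kser alpha) V k) (sfrechet V (Kser alpha) k)) j.

Lemma Kser_defect_0 alpha V j : Kser_defect alpha V 0 j = comm_uux (nvars (V 0%nat)) (V 0%nat) j.
Proof.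
  unfold Kser_defect, sfrechet. rewrite <- frechet_uux_comm, dp_eval_sub, !dp_eval_concat_map_seq.
  cbn [sum_upto Nat.add Nat.sub]. change (Kser alpha 0%nat) with uux. ring.
Qed.

Lemma Kser_defect_1 alpha V j : Kser_defect alpha V 1 j = comm_uux (nvars (V 1%nat)) (V 1%nat) j.
Proof.
  unfold Kser_defect, sfrechet. rewrite <- frechet_uux_comm, dp_eval_sub, !dp_eval_concat_map_seq.
  cbn [sum_upto Nat.add Nat.sub].
  change (Kser alpha 0%nat) with uux. change (Kser alpha 1%nat) with (@nil term).
  rewrite dp_eval_frechet_nil. simpl. ring.
Qed.

Lemma Kser_defect_SS alpha V k j :
  Kser_defect alpha V (S (S k)) j
  = comm_uux (nvars (V (S (S k)))) (V (S (S k))) j + comm_ux3 alpha (V k) j.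
Proof.
  unfold Kser_defect, comm_ux3, sfrechet. rewrite <- frechet_uux_comm, dp_eval_sub.
  assert (HK : dp_eval (concat (map (fun i => frechet (Kser alpha i) (V (S (S k) - i)%nat))
                                    (seq 0 (S (S (S k)))))) j
               = dp_eval (frechet uux (V (S (S k)))) j
                 + dp_eval (frechet (alpha_ux3 alpha) (V k)) j).
  { rewrite dp_eval_concat_map_seq. cbn [sum_upto Nat.add Nat.sub].
    rewrite sum_upto_zero by (intros i Hi; now rewrite Kser_other by lia).
    change (Kser alpha 0%nat) with uux. change (Kser alpha 2%nat) with (alpha_ux3 alpha).
    change (Kser alpha 1%nat) with (@nil term). change (dp_eval (frechet [] (V (S k))) j) with 0.
    rewrite Nat.sub_0_r. ring. }
  assert (HV : dp_eval (concat (map (fun i => frechet (V i) (Kser alpha (S (S k) - i)%nat))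
                                    (seq 0 (S (S (S k)))))) j
               = dp_eval (frechet (V (S (S k))) uux) j
                 + dp_eval (frechet (V k) (alpha_ux3 alpha)) j).
  { rewrite dp_eval_concat_map_seq, !sum_upto_S. cbn [Nat.add].
    rewrite sum_upto_zero
      by (intros i Hi; rewrite Kser_other by lia; apply dp_eval_frechet_nil).
    replace (S (S k) - S k)%nat with 1%nat by lia. replace (S (S k) - k)%nat with 2%nat by lia.
    rewrite Nat.sub_diag. change (Kser alpha 1%nat) with (@nil term).
    change (Kser alpha 0%nat) with uux. change (Kser alpha 2%nat) with (alpha_ux3 alpha).
    rewrite dp_eval_frechet_nil. ring. }
  rewrite HK, HV. ring.
Qed.

Lemma comm_uux_monomial f m j :
  comm_uux 1 [mkTerm f [m]] j = (1 - INR m) * f (j 0%nat) * j 1%nat ^ S m.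
Proof.
  unfold comm_uux. cbn [sum_upto]. rewrite dp_eval_dpartial_S.
  unfold Duux_tail, Duux, dterm. simpl. unfold term_eval. simpl.
  destruct m; simpl; ring.
Qed.

Lemma comm_ux3_monomial alpha f m j :
  comm_ux3 alpha [mkTerm f [m]] j
  = ((1 - INR m) * Derive alpha (j 0%nat) * f (j 0%nat) + 2 * alpha (j 0%nat) * Derive f (j 0%nat))
    * j 1%nat ^ (m + 3).
Proof.
  unfold comm_ux3. rewrite !dp_eval_frechet. simpl. unfold term_eval. simpl.
  rewrite pow_add. destruct m; simpl; ring.
Qed.

Lemma Qbeta_even alpha beta n :
  Qbeta alpha beta (2 * n)%nat = [mkTerm (beta_n alpha beta n) [S (2 * n)]].
Proof. unfold Qbeta. now rewrite Nat.even_even, Nat.div2_double. Qed.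

Lemma Qbeta_odd alpha beta n : Qbeta alpha beta (2 * n + 1)%nat = [].
Proof. unfold Qbeta. now rewrite Nat.even_odd. Qed.

Lemma comm_uux_nil N j : comm_uux N [] j = 0.
Proof. unfold comm_uux. rewrite sum_upto_zero; [simpl; ring|intros; simpl; ring]. Qed.

Theorem Qbeta_formal_symmetry alpha beta :
  smooth alpha -> smooth beta -> formal_symmetry (Kser alpha) (Qbeta alpha beta).
Proof.
  intros Ha Hb k j. change (dp_eval [] j) with 0. fold (Kser_defect alpha (Qbeta alpha beta) k j).
  destruct (Nat.Even_or_Odd k) as [[n ->]|[n ->]].
  - destruct n as [|n].
    + rewrite Kser_defect_0. change 0%nat with (2 * 0)%nat. rewrite Qbeta_even.
      simpl nvars. rewrite comm_uux_monomial. simpl. ring.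
    + replace (2 * S n)%nat with (S (S (2 * n))) by lia.
      rewrite Kser_defect_SS.
      replace (S (S (2 * n))) with (2 * S n)%nat by lia. rewrite !Qbeta_even.
      simpl nvars. rewrite comm_uux_monomial, comm_ux3_monomial.
      replace (S (2 * n) + 3)%nat with (S (S (2 * S n))) by lia.
      assert (Hrec := beta_n_rec alpha beta Ha Hb (S n) (j 0%nat) ltac:(lia)).
      simpl Nat.pred in Hrec.
      rewrite !S_INR, !mult_INR, !S_INR in *. simpl (INR 2). simpl (INR 0) in *.
      transitivity (-2 * ((INR n + 1) * beta_n alpha beta (S n) (j 0%nat)
                     - ((1 - (INR n + 1)) * Derive alpha (j 0%nat) * beta_n alpha beta n (j 0%nat)
                        + alpha (j 0%nat) * Derive (beta_n alpha beta n) (j 0%nat)))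
                    * j 1%nat ^ S (S (2 * S n))); [ring|].
      rewrite Hrec. ring.
  - destruct n as [|n].
    + simpl. rewrite Kser_defect_1. replace 1%nat with (2 * 0 + 1)%nat by reflexivity.
      rewrite Qbeta_odd. apply comm_uux_nil.
    + replace (2 * S n + 1)%nat with (S (S (2 * n + 1))) by lia.
      rewrite Kser_defect_SS. replace (S (S (2 * n + 1))) with (2 * S n + 1)%nat by lia.
      rewrite !Qbeta_odd, comm_uux_nil. unfold comm_ux3. rewrite dp_eval_frechet_nil. simpl. ring.
Qed.

Lemma coef_diff_Qbeta alpha beta k :
  smooth alpha -> smooth beta -> coef_diff (Qbeta alpha beta k).
Proof.
  intros Ha Hb. unfold Qbeta. destruct (Nat.even k); repeat constructor.
  intros x. now apply beta_n_ex_derive.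
Qed.

Lemma comm_ux3_dp_eq alpha V V' :
  coef_diff V -> coef_diff V' -> dp_eq V V' -> forall j, comm_ux3 alpha V j = comm_ux3 alpha V' j.
Proof.
  intros H H' E j. unfold comm_ux3.
  rewrite (frechet_dp_eq_r (alpha_ux3 alpha) V V' (le_n 1) H H' E j),
          (frechet_dp_eq_l V V' _ H H' E j).
  reflexivity.
Qed.

Lemma dp_homog_sub d A B : dp_homog d A -> dp_homog d B -> dp_homog d (dp_sub A B).
Proof. intros HA HB. apply Forall_app. split; [exact HA|]. now apply Forall_map. Qed.

Lemma Qbeta_homog alpha beta n : dp_homog (2 * n + 1) (Qbeta alpha beta (2 * n)%nat).
Proof. rewrite Qbeta_even. repeat constructor. simpl. lia. Qed.

Theorem formal_symmetry_unique alpha beta (Q : series) :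
  smooth alpha -> smooth beta ->
  (forall k, dp_smooth (Q k)) ->
  (forall n, dp_homog (2 * n + 1) (Q (2 * n)%nat)) ->
  (forall n, dp_eq (Q (2 * n + 1)%nat) nil) ->
  dp_eq (Q O) [mkTerm beta [1%nat]] ->
  formal_symmetry (Kser alpha) Q ->
  forall k, dp_eq (Q k) (Qbeta alpha beta k).
Proof.
  intros Ha Hb Hsmooth Hhom Hodd HQ0 Hsym k.
  induction k as [k IH] using lt_wf_ind.
  destruct (Nat.Even_or_Odd k) as [[n ->]|[n ->]];
    [|intros j; rewrite Qbeta_odd; apply Hodd].
  destruct n as [|n].
  - intros j. simpl. rewrite HQ0. simpl. unfold term_eval. simpl. now rewrite beta_n_0.
  - set (Qb := Qbeta alpha beta (2 * S n)%nat).
    set (N := Nat.max (nvars (Q (2 * S n)%nat)) (nvars Qb)).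
    assert (Hcomm : forall j, comm_uux N (dp_sub (Q (2 * S n)%nat) Qb) j = 0).
    { intros j. assert (HQ := Hsym (S (S (2 * n))) j).
      assert (Hex := Qbeta_formal_symmetry alpha beta Ha Hb (S (S (2 * n))) j).
      change (dp_eval [] j) with 0 in HQ, Hex.
      fold (Kser_defect alpha Q (S (S (2 * n))) j) in HQ.
      fold (Kser_defect alpha (Qbeta alpha beta) (S (S (2 * n))) j) in Hex.
      rewrite Kser_defect_SS in HQ, Hex.
      rewrite (comm_ux3_dp_eq alpha _ _ (dp_smooth_coef_diff _ (Hsmooth _))
                 (coef_diff_Qbeta alpha beta _ Ha Hb) (IH (2 * n)%nat ltac:(lia)) j) in HQ.
      replace (S (S (2 * n))) with (2 * S n)%nat in HQ, Hex by lia.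
      rewrite comm_uux_sub, (comm_uux_pad N (Q _)), (comm_uux_pad N Qb) by (unfold N; lia).
      fold Qb in Hex. lra. }
    intros j. apply Rminus_diag_uniq. rewrite <- dp_eval_sub.
    apply (comm_uux_homog_injective _ (2 * S n + 1) N);
      [lia| |now apply dp_homog_sub, Qbeta_homog|exact Hcomm].
    rewrite nvars_sub. unfold N. lia.
Qed.

Theorem mainTheorem6 (alpha beta : R -> R) (Halpha : smooth alpha) (Hbeta : smooth beta) :
  formal_symmetry (Kser alpha) (Qbeta alpha beta)
  /\ (forall x, beta_n alpha beta 0 x = beta x)
  /\ beta_rec alpha (beta_n alpha beta)
  /\ (forall b : nat -> R -> R, (forall x, b O x = beta x) -> beta_rec alpha b ->
        forall n x, b n x = beta_n alpha beta n x)
  /\ (forall Q : series,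
        (forall k, dp_smooth (Q k)) ->
        (forall n, dp_homog (2 * n + 1) (Q (2 * n)%nat)) ->
        (forall n, dp_eq (Q (2 * n + 1)%nat) nil) ->
        dp_eq (Q O) [mkTerm beta [1%nat]] ->
        formal_symmetry (Kser alpha) Q ->
        forall k, dp_eq (Q k) (Qbeta alpha beta k)).
Proof.
  repeat split.
  - now apply Qbeta_formal_symmetry.
  - apply beta_n_0.
  - now apply beta_n_rec.
  - intros b. now apply beta_rec_unique.
  - intros Q. now apply formal_symmetry_unique.
Qed.
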